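(* Let $G$ be a graph, $k\ge1$ an integer, and $G_k$ the graph obtained from $G$ by cloning each vertex exactly $k-1$ times. Then, as polynomials, $$P(G_k;u,x)=P\big(G;u,(1+x)^k-1\big),$$ and consequently $$q(G_k;x,y)=q\Big(G;(x-1)\frac{y^k-1}{y-1}+1,\;y^k\Big).$$
   Context: All graphs are finite and undirected, without multiple edges but possibly with self loops. For $A\subseteq V$, $G[A]$ is the induced subgraph; $rk(G)$ is the $\mathbb{F}_2$-rank of the adjacency matrix $(m_{ij})$ ($m_{ij}=1$ iff $\{i,j\}\in E$; $m_{ii}=1$ iff $i$ has a self loop; empty graph: rank $0$). $q(G;x,y)=\sum_{A\subseteq V}(x-1)^{rk(G[A])}(y-1)^{|A|-rk(G[A])}$ and $P(G;u,x)=\sum_{A\subseteq V}x^{|A|}u^{rk(G[A])}$, with $0^0=1$; here $\frac{y^k-1}{y-1}=1+y+\dots+y^{k-1}$. The graph $G_k$ has vertex set $\{a_i: a\in V,\ 1\le i\le k\}$; for distinct $a,b\in V$, $a_i$ and $b_j$ are adjacent iff $\{a,b\}\in E$; $a_i,a_j$ are adjacent (for $i=j$: $a_i$ has a self loop) iff $a$ has a self loop in $G$. *)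

From HB Require Import structures.
From mathcomp Require Import all_boot all_order all_algebra.
Set Implicit Arguments. Unset Strict Implicit. Unset Printing Implicit Defensive.
Import GRing.Theory.
Local Open Scope ring_scope.

(* A graph on a finite vertex type T is an adjacency relation e : rel T,
   assumed symmetric (undirected); e a a means a has a self loop. *)

Definition adjmx (T : finType) (e : rel T) (A : {set T}) : 'M['F_2]_#|A| :=
  \matrix_(i < #|A|, j < #|A|)
     (e (@enum_val T (mem A) i) (@enum_val T (mem A) j))%:R.

Definition rk (T : finType) (e : rel T) (A : {set T}) : nat := \rank (adjmx e A).

Definition Pgraph (R : comPzRingType) (T : finType) (e : rel T) (u x : R) : R :=
  \sum_(A : {set T}) x ^+ #|A| * u ^+ rk e A.

Definition qgraph (R : comPzRingType) (T : finType) (e : rel T) (x y : R) : R :=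
  \sum_(A : {set T}) (x - 1) ^+ rk e A * (y - 1) ^+ (#|A| - rk e A)%N.

Definition clone (T : finType) (e : rel T) (k : nat) : rel (T * 'I_k)%type :=
  fun p q => if p.1 != q.1 then e p.1 q.1 else e p.1 p.1.
Arguments clone {T} e k.

From HB Require Import structures.
From mathcomp Require Import all_boot all_order all_algebra.
Import GRing.Theory.
Set Implicit Arguments. Unset Strict Implicit.
Local Open Scope ring_scope.

(* A subset B of the vertices T * 'I_k of G_k is the same thing as its family
   of fibres f a = {i | (a, i) \in B}.  Adjacency in G_k only depends on first
   coordinates, so the adjacency matrix of G_k[B] and that of G[A], where A is
   the support {a | f a != set0}, are square submatrices of one another, whence
   rk(G_k[B]) = rk(G[A]); moreover |B| = |A| + \sum_(a in A) (|f a| - 1).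
   Grouping the sum over B by the support A therefore turns any summand
   Phi(rk, |B|) that is geometric in |B| with ratio z into
   Phi(rk(G[A]), |A|) times one factor \sum_(S != set0) z^(|S|-1) per vertex
   of A, and this factor equals \sum_(i < k) (1 + z)^i by the binomial theorem
   (lemma sum_clone).  Both P and q have summands of this shape; the theorem
   follows by the geometric-sum identity (1+w)^k - 1 = w \sum_(i<k) (1+w)^i. *)

Lemma mxrank_mxsub (F : fieldType) (m n : nat) (M : 'M[F]_m) (g : 'I_n -> 'I_m) :
  (\rank (mxsub g g M) <= \rank M)%N.
Proof.
have -> : mxsub g g M = rowsub g 1%:M *m (M *m colsub g 1%:M).
  by rewrite mulmx_colsub mulmx1 -mxsub_mul mul1mx.
exact: leq_trans (mxrankM_maxr _ _) (mxrankM_maxl _ _).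
Qed.

Lemma rk_le_card (T : finType) (e : rel T) (A : {set T}) : (rk e A <= #|A|)%N.
Proof. exact: rank_leq_row. Qed.

(* Rank is monotone along maps A1 -> A2 that preserve adjacency (loops
   included): the adjacency matrix of A1 is then a submatrix of that of A2. *)
Lemma rk_le_adjacency_preserving (T1 T2 : finType) (e1 : rel T1) (e2 : rel T2)
    (A1 : {set T1}) (A2 : {set T2}) (phi : T1 -> T2) :
  {in A1, forall p, phi p \in A2} ->
  {in A1 &, forall p q, e1 p q = e2 (phi p) (phi q)} ->
  (rk e1 A1 <= rk e2 A2)%N.
Proof.
move=> phiA phi_e.
pose g (i : 'I_#|A1|) : 'I_#|A2| :=
  enum_rank_in (phiA _ (enum_valP i)) (phi (enum_val i)).
have gK i : enum_val (g i) = phi (enum_val i).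
  by rewrite enum_rankK_in // phiA // enum_valP.
rewrite /rk; suff -> : adjmx e1 A1 = mxsub g g (adjmx e2 A2) by apply: mxrank_mxsub.
by apply/matrixP => i j; rewrite !mxE !gK phi_e ?enum_valP.
Qed.

Lemma clone_adj (T : finType) (e : rel T) (k : nat) (p q : T * 'I_k) :
  clone e k p q = e p.1 q.1.
Proof. by rewrite /clone; case: (eqVneq p.1 q.1) => [->|]. Qed.

Lemma sum_subsets_by_card (R : nmodType) (n : nat) (g : nat -> R) :
  \sum_(S : {set 'I_n}) g #|S| = \sum_(j < n.+1) g j *+ 'C(n, j).
Proof.
transitivity (\sum_(S : {set 'I_n}) \sum_(j < n.+1 | #|S| == j) g j).
  apply: eq_bigr => S _.
  have S_small : (#|S| < n.+1)%N by rewrite ltnS -[leqRHS](card_ord n) max_card.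
  by rewrite (big_pred1 (Ordinal S_small)).
rewrite (exchange_big_dep xpredT) //=; apply: eq_bigr => j _.
rewrite sumr_const -[X in 'C(X, _)](card_ord n) -card_draws.
by congr (_ *+ _); apply: eq_card => S; rewrite inE.
Qed.

Lemma sum_binomial_shift (R : comPzRingType) (z : R) (n : nat) :
  \sum_(j < n) z ^+ j *+ 'C(n, j.+1) = \sum_(i < n) (1 + z) ^+ i.
Proof.
elim: n => [|n IH]; first by rewrite !big_ord0.
rewrite [RHS]big_ord_recr /= -IH.
under eq_bigr => j _ do rewrite binS mulrnDr.
rewrite big_split /= -exprD1n [(1 + z)]addrC; congr (_ + _).
by rewrite big_ord_recr /= bin_small // mulr0n addr0.
Qed.

Lemma sum_nonempty_subsets (R : comPzRingType) (n : nat) (z : R) :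
  \sum_(S : {set 'I_n} | S != set0) z ^+ (#|S|).-1 = \sum_(i < n) (1 + z) ^+ i.
Proof.
rewrite -sum_binomial_shift; apply: (@addrI _ 1).
have := sum_subsets_by_card n (fun j => z ^+ j.-1).
rewrite (bigD1 set0) //= cards0 big_ord_recl /= bin0 mulr1n => ->.
by congr (_ + _); apply: eq_bigr => i _; rewrite lift0.
Qed.

Section Fibres.
Variables (T : finType) (k : nat).

Definition set_of_fibres (f : {ffun T -> {set 'I_k}}) : {set T * 'I_k} :=
  [set p | p.2 \in f p.1].
Definition fibres (B : {set T * 'I_k}) : {ffun T -> {set 'I_k}} :=
  [ffun a => [set i | (a, i) \in B]].
Definition support (f : {ffun T -> {set 'I_k}}) : {set T} :=
  [set a | f a != set0].

Lemma set_of_fibresK : cancel set_of_fibres fibres.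
Proof. by move=> f; apply/ffunP => a; apply/setP => i; rewrite ffunE !inE. Qed.

Lemma fibresK : cancel fibres set_of_fibres.
Proof. by move=> B; apply/setP => -[a i]; rewrite !inE ffunE inE. Qed.

Lemma sum_over_fibres (R : nmodType) (W : {set T * 'I_k} -> R) :
  \sum_B W B = \sum_(f : {ffun T -> {set 'I_k}}) W (set_of_fibres f).
Proof.
rewrite (reindex set_of_fibres) //; apply: onW_bij.
exact: Bijective set_of_fibresK fibresK.
Qed.

Lemma card_set_of_fibres (f : {ffun T -> {set 'I_k}}) :
  #|set_of_fibres f| = (#|support f| + \sum_(a in support f) (#|f a|).-1)%N.
Proof.
have -> : #|set_of_fibres f| = (\sum_a #|f a|)%N.
  rewrite -sum1_card (partition_big fst xpredT) //=; apply: eq_bigr => a _.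
  rewrite -sum1_card (reindex (pair a)) /=; last first.
    by exists snd => [i|[b i] /andP[_ /eqP /= <-]].
  by apply: eq_bigl => i; rewrite inE eqxx andbT.
rewrite (bigID (mem (support f))) /= [X in (_ + X)%N]big1 => [|a]; last first.
  by rewrite inE negbK => /eqP ->; rewrite cards0.
rewrite addn0 -sum1_card -big_split /=; apply: eq_bigr => a.
by rewrite inE -card_gt0 => /prednK.
Qed.

(* G_k[B] and G[A] have the same rank, A the support of the fibres of B:
   projecting to T maps B onto A, and choosing one clone in each nonempty
   fibre maps A back into B, both preserving adjacency. *)
Lemma rk_clone (e : rel T) (f : {ffun T -> {set 'I_k}}) :
  rk (clone e k) (set_of_fibres f) = rk e (support f).
Proof.
apply/eqP; rewrite eqn_leq; apply/andP; split.
  apply: (@rk_le_adjacency_preserving _ _ _ _ _ _ fst) => [p|p q _ _].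
    by rewrite !inE => pf; apply/set0Pn; exists p.2.
  exact: clone_adj.
have [->|[a0 a0_supp]] := set_0Vmem (support f).
  by rewrite (leq_trans (rk_le_card e set0)) // cards0.
have [i0 _] : {i0 : 'I_k | i0 \in f a0}.
  by move: a0_supp; rewrite inE => /set0Pn/sigW.
pose phi a := (a, odflt i0 [pick i in f a]).
apply: (@rk_le_adjacency_preserving _ _ _ _ _ _ phi) => [a|a b _ _].
  rewrite !inE /phi /= => /set0Pn[i fai].
  by case: pickP => [j //|/(_ i)]; rewrite fai.
by rewrite clone_adj.
Qed.

Lemma sum_by_support (R : comPzRingType) (F : {set T} -> R)
    (w : {set 'I_k} -> R) :
  \sum_(f : {ffun T -> {set 'I_k}}) F (support f) * \prod_(a in support f) w (f a)
  = \sum_(A : {set T}) F A * (\sum_(S : {set 'I_k} | S != set0) w S) ^+ #|A|.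
Proof.
rewrite (partition_big support xpredT) //=; apply: eq_bigr => A _.
rewrite -prodr_const (big_distr_big_dep set0) /= mulr_sumr.
apply: eq_big => [f|f /eqP <- //].
apply/eqP/pfamilyP => [<- | [suppA fA]].
  by split; [apply/subsetP => a; rewrite !inE | move=> a; rewrite inE].
apply/setP => a; rewrite inE; case: (boolP (a \in A)) => [/fA //|aNA].
by apply: contraNF aNA => fa0; apply: (subsetP suppA); rewrite inE.
Qed.

End Fibres.

Lemma sum_clone (R : comPzRingType) (T : finType) (e : rel T) (k : nat)
    (z : R) (Phi : nat -> nat -> R) :
  (forall r n m, (r <= n)%N -> Phi r (n + m)%N = Phi r n * z ^+ m) ->
  \sum_(B : {set T * 'I_k}) Phi (rk (clone e k) B) #|B|
  = \sum_(A : {set T}) Phi (rk e A) #|A| * (\sum_(i < k) (1 + z) ^+ i) ^+ #|A|.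
Proof.
move=> PhiD; rewrite sum_over_fibres -sum_nonempty_subsets.
rewrite -(sum_by_support (fun A => Phi (rk e A) #|A|)
                           (fun S => z ^+ (#|S|).-1)).
apply: eq_bigr => f _.
by rewrite rk_clone card_set_of_fibres PhiD ?rk_le_card // prodrXr.
Qed.

Theorem mainTheorem4 (T : finType) (e : rel T) (e_sym : symmetric e)
    (k : nat) (k_pos : (0 < k)%N) (R : comPzRingType) (u x y : R) :
  Pgraph (clone e k) u x = Pgraph e u ((1 + x) ^+ k - 1) /\
  qgraph (clone e k) x y =
    qgraph e ((x - 1) * (\sum_(i < k) y ^+ i) + 1) (y ^+ k).
Proof.
have geometric (w : R) : (1 + w) ^+ k - 1 = w * \sum_(i < k) (1 + w) ^+ i.
  by rewrite subrX1 [1 + w]addrC addrK.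
split.
  rewrite /Pgraph (sum_clone e k (z:=x) (Phi:=fun r n => x ^+ n * u ^+ r)).
    by apply: eq_bigr => A _; rewrite geometric exprMn mulrAC.
  by move=> r n m _; rewrite exprD mulrAC.
rewrite /qgraph (sum_clone e k (z:=y - 1)
           (Phi:=fun r n => (x - 1) ^+ r * (y - 1) ^+ (n - r))).
  rewrite [1 + _]addrC subrK; set c := \sum_(i < k) y ^+ i.
  apply: eq_bigr => A _; rewrite addrK subrX1 -/c !exprMn.
  by rewrite -[X in c ^+ X](subnKC (rk_le_card e A)) exprD mulrACA.
by move=> r n m rn; rewrite -addnBAC // exprD mulrA.
Qed.
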